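(* Let $\epsilon>0$ and let $K(x,y)=\mathbf{1}(\|x-y\|_2\le\epsilon)$ be the $\epsilon$-neighborhood kernel. Then there exist $d,k\in\mathbb{N}$ and a finite dataset $X\subset\mathbb{R}^d$ such that $p(X)=\infty$; that is, the optimal kernel $k$-means cost of $X$ with respect to $K$ is $0$ while every interpretable decision tree with $k$ leaves on $X$ has strictly positive kernel $k$-means cost.
   Context: Kernel $k$-means cost of a partition $C_1,\dots,C_k$ of $X$ with respect to $K$: $\mathrm{cost}(C_1,\dots,C_k)=\sum_{x\in X}K(x,x)-\sum_l\frac{1}{|C_l|}\sum_{x,y\in C_l}K(x,y)$ (empty clusters contribute $0$); $\mathrm{cost}_{opt}(X)$ is its minimum over partitions into $k$ parts. An interpretable decision tree with $k$ leaves is a binary tree whose leaves partition $X$, where each internal node splits its data $X^u$ into $\{x\in X^u:x_i\in[\theta_1,\theta_2]\}$ and $\{x\in X^u:x_i\notin[\theta_1,\theta_2]\}$ for some $i\in[d]$ and reals $\theta_1<\theta_2$; $\mathrm{cost}(T,X)$ is the cost of its leaf partition. The price of explainability is $p(X)=\min_T \mathrm{cost}(T,X)/\mathrm{cost}_{opt}(X)$, with the convention that a positive number divided by $0$ is $\infty$. *)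

From HB Require Import structures.
From mathcomp Require Import all_boot all_order all_algebra.
From mathcomp Require Import reals.
Set Implicit Arguments. Unset Strict Implicit. Unset Printing Implicit Defensive.
Import Order.TTheory GRing.Theory Num.Theory.
Local Open Scope ring_scope.

Section KernelKMeans.
Variable R : realType.
Variable d : nat.

(* points of R^d are row vectors; coordinate i of x is x ord0 i *)
Definition point := 'rV[R]_d.

Definition dist2 (x y : point) : R :=
  Num.sqrt (\sum_(i < d) (x ord0 i - y ord0 i) ^+ 2).

Definition nbhd_kernel (eps : R) (x y : point) : R :=
  if dist2 x y <= eps then 1 else 0.

(* kernel k-means cost of a family of clusters of X (given as sequences);
   empty clusters contribute 0 since 0^-1 = 0 in MathComp *)
Definition clusters_cost (K : point -> point -> R) (X : seq point)
    (cs : seq (seq point)) : R :=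
  \sum_(x <- X) K x x
  - \sum_(C <- cs) (size C)%:R^-1 * \sum_(x <- C) \sum_(y <- C) K x y.

(* partition of X into k (possibly empty) parts, given by a labeling f *)
Definition labeling_clusters (k : nat) (f : point -> 'I_k) (X : seq point)
    : seq (seq point) :=
  [seq [seq x <- X | f x == l] | l <- enum 'I_k].

Definition partition_cost (K : point -> point -> R) (k : nat)
    (f : point -> 'I_k) (X : seq point) : R :=
  clusters_cost K X (labeling_clusters f X).

Definition is_cost_opt (K : point -> point -> R) (k : nat) (X : seq point)
    (c : R) : Prop :=
  (exists f : point -> 'I_k, partition_cost K f X = c) /\
  (forall f : point -> 'I_k, c <= partition_cost K f X).

(* interpretable decision trees: a node with (i, th1, th2) sends the points
   with x_i in [th1, th2] to the left subtree, the others to the right *)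
Inductive itree : Type :=
  | Leaf : itree
  | Node : 'I_d -> R -> R -> itree -> itree -> itree.

Fixpoint itree_valid (t : itree) : Prop :=
  match t with
  | Leaf => True
  | Node _ th1 th2 l r => th1 < th2 /\ itree_valid l /\ itree_valid r
  end.

Fixpoint nleaves (t : itree) : nat :=
  match t with
  | Leaf => 1%N
  | Node _ _ _ l r => (nleaves l + nleaves r)%N
  end.

Definition in_slab (i : 'I_d) (th1 th2 : R) (x : point) : bool :=
  (th1 <= x ord0 i) && (x ord0 i <= th2).

Fixpoint leaf_clusters (t : itree) (S : seq point) : seq (seq point) :=
  match t with
  | Leaf => [:: S]
  | Node i th1 th2 l r =>
      leaf_clusters l [seq x <- S | in_slab i th1 th2 x]
      ++ leaf_clusters r [seq x <- S | ~~ in_slab i th1 th2 x]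
  end.

Definition tree_cost (K : point -> point -> R) (t : itree) (X : seq point) : R :=
  clusters_cost K X (leaf_clusters t X).

End KernelKMeans.

From HB Require Import structures.
From mathcomp Require Import all_boot all_order all_algebra.
From mathcomp Require Import reals.
From mathcomp Require Import ring lra zify.
Import Order.TTheory GRing.Theory Num.Theory.
Set Implicit Arguments. Unset Strict Implicit. Unset Printing Implicit Defensive.
Local Open Scope ring_scope.

(* For a kernel with K(x,x) = 1 and K <= 1, the cost of a partition of X is
   sum_C |C|^-1 sum_{x,y in C} (1 - K(x,y)): it is never negative, vanishes when
   K = 1 inside every cluster, and is positive as soon as some cluster holds a
   pair with K(x,y) < 1.
   Take k = 2 and the four vertices (+-h, 0), (0, +-h) of a square, with
   h sqrt 2 <= eps < 2h. Adjacent vertices are eps-close and opposite ones are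
   not, so cutting along the diagonal x + y = 0 costs 0. A tree with two leaves
   makes a single split on one coordinate i, and the two opposite vertices whose
   i-th coordinate is 0 end up in the same leaf. *)

Section ClusterLoss.
Variables (R : realType) (d : nat).
Variable K : 'rV[R]_d -> 'rV[R]_d -> R.
Hypothesis K_refl : forall x, K x x = 1.
Hypothesis K_le1 : forall x y, K x y <= 1.
Implicit Types (C X : seq 'rV[R]_d) (cs : seq (seq 'rV[R]_d)).

Definition cluster_loss C :=
  (size C)%:R^-1 * \sum_(x <- C) \sum_(y <- C) (1 - K x y).

Lemma sumr_const_seq (T : Type) (s : seq T) (c : R) :
  \sum_(x <- s) c = c *+ size s.
Proof. by rewrite big_const_seq count_predT iter_addr_0. Qed.

Lemma clusters_costE X cs : (\sum_(C <- cs) size C)%N = size X ->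
  clusters_cost K X cs = \sum_(C <- cs) cluster_loss C.
Proof.
move=> sizes; rewrite /clusters_cost.
under eq_bigr do rewrite K_refl.
rewrite sumr_const_seq -sizes natr_sum -sumrB.
apply: eq_bigr => C _; rewrite /cluster_loss.
under [X in _ = _ * X]eq_bigr do rewrite sumrB sumr_const_seq.
rewrite sumrB sumr_const_seq -[(size C)%:R *+ size C]mulr_natl mulrBr.
have [->|nC] := eqVneq (size C)%:R (0 : R); first by rewrite invr0 !mul0r.
by rewrite mulKf.
Qed.

Lemma cluster_loss_ge0 C : 0 <= cluster_loss C.
Proof.
rewrite mulr_ge0 ?invr_ge0 //.
by apply: sumr_ge0 => x _; apply: sumr_ge0 => y _; rewrite subr_ge0.
Qed.

Lemma cluster_loss_eq0 C : {in C &, forall x y, K x y = 1} -> cluster_loss C = 0.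
Proof.
move=> K1C; rewrite /cluster_loss big_seq big1 ?mulr0 // => x xC.
by rewrite big_seq big1 // => y yC; rewrite K1C ?subrr.
Qed.

Lemma ler_mem_sum (T : eqType) (s : seq T) (F : T -> R) z :
  z \in s -> (forall y, 0 <= F y) -> F z <= \sum_(y <- s) F y.
Proof. by move=> zs F_ge0; rewrite (big_rem z) //= lerDl sumr_ge0. Qed.

Lemma cluster_loss_gt0 C p q : p \in C -> q \in C -> K p q < 1 ->
  0 < cluster_loss C.
Proof.
move=> pC qC Kpq; have C_gt0 : (0 < size C)%N by case: C pC {qC}.
have loss_ge0 x y : 0 <= 1 - K x y by rewrite subr_ge0.
rewrite mulr_gt0 ?invr_gt0 ?ltr0n //.
apply: (lt_le_trans _ (ler_mem_sum pC _)) => [|x]; last exact: sumr_ge0.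
apply: (lt_le_trans _ (ler_mem_sum (F := fun y => 1 - K p y) qC _)) => //.
by rewrite subr_gt0.
Qed.

Lemma clusters_cost_ge0 X cs : (\sum_(C <- cs) size C)%N = size X ->
  0 <= clusters_cost K X cs.
Proof.
move=> sizes; rewrite clusters_costE //.
by apply: sumr_ge0 => C _; apply: cluster_loss_ge0.
Qed.

Lemma clusters_cost_gt0 X cs C p q : (\sum_(C <- cs) size C)%N = size X ->
  C \in cs -> p \in C -> q \in C -> K p q < 1 -> 0 < clusters_cost K X cs.
Proof.
move=> sizes Ccs pC qC Kpq; rewrite clusters_costE // (big_rem C) //=.
apply: ltr_wpDr; first by apply: sumr_ge0 => C' _; apply: cluster_loss_ge0.
exact: cluster_loss_gt0 pC qC Kpq.
Qed.

Lemma labeling_clusters_size k (f : 'rV[R]_d -> 'I_k) X :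
  (\sum_(C <- labeling_clusters f X) size C)%N = size X.
Proof.
rewrite /labeling_clusters big_map.
under eq_bigr do rewrite size_filter -sum1_count.
rewrite (exchange_big_dep predT) //= -sum1_size; apply: eq_bigr => x _.
under eq_bigl do rewrite eq_sym.
by rewrite sum1_count count_uniq_mem ?enum_uniq ?mem_enum.
Qed.

Lemma partition_cost_ge0 k (f : 'rV[R]_d -> 'I_k) X : 0 <= partition_cost K f X.
Proof. exact/clusters_cost_ge0/labeling_clusters_size. Qed.

Lemma partition_cost_eq0 k (f : 'rV[R]_d -> 'I_k) X :
  {in X &, forall x y, f x = f y -> K x y = 1} -> partition_cost K f X = 0.
Proof.
move=> K1f; rewrite /partition_cost clusters_costE ?labeling_clusters_size //.
rewrite big_map big1 // => l _; apply: cluster_loss_eq0 => x y.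
rewrite !mem_filter => /andP[/eqP fx xX] /andP[/eqP fy yX].
by apply: K1f; rewrite // fx fy.
Qed.

Lemma leaf_clusters_size (t : itree R d) X :
  (\sum_(C <- leaf_clusters t X) size C)%N = size X.
Proof.
elim: t X => [|i a b l IHl r IHr] X /=; first by rewrite big_seq1.
by rewrite big_cat IHl IHr !size_filter -(count_predC (in_slab i a b)).
Qed.

Lemma split_cost_gt0 i a b X p q :
  p \in X -> q \in X -> p ord0 i = q ord0 i -> K p q < 1 ->
  0 < tree_cost K (Node i a b (Leaf R d) (Leaf R d)) X.
Proof.
move=> pX qX pqi Kpq.
have slab_q : in_slab i a b q = in_slab i a b p by rewrite /in_slab pqi.
have p_leaf : [seq x <- X | in_slab i a b x == in_slab i a b p]
    \in leaf_clusters (Node i a b (Leaf R d) (Leaf R d)) X.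
  rewrite !inE; apply/orP; case: (in_slab i a b p); [left | right];
  by apply/eqP/eq_filter => x; case: (in_slab i a b x).
apply: (clusters_cost_gt0 (leaf_clusters_size _ X) p_leaf _ _ Kpq);
  by rewrite mem_filter ?slab_q eqxx.
Qed.

End ClusterLoss.

Lemma nleaves_gt0 (R : realType) d (t : itree R d) : (0 < nleaves t)%N.
Proof. by elim: t => //= i _ _ l l_gt0 r _; rewrite addn_gt0 l_gt0. Qed.

Lemma nleaves_eq1 (R : realType) d (t : itree R d) : nleaves t = 1%N ->
  t = Leaf R d.
Proof.
case: t => //= i a b l r; have := nleaves_gt0 l; have := nleaves_gt0 r; lia.
Qed.

Lemma nleaves_eq2 (R : realType) d (t : itree R d) : nleaves t = 2%N ->
  exists i a b, t = Node i a b (Leaf R d) (Leaf R d).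
Proof.
case: t => [|i a b l r] //= lr2; exists i, a, b.
have := nleaves_gt0 l; have := nleaves_gt0 r => r_gt0 l_gt0.
have l1 : nleaves l = 1%N by lia.
have r1 : nleaves r = 1%N by lia.
by rewrite (nleaves_eq1 l1) (nleaves_eq1 r1).
Qed.

Section NeighborhoodKernel.
Variables (R : realType) (d : nat) (eps : R).
Hypothesis eps_ge0 : 0 <= eps.

Lemma nbhd_kernelE (x y : 'rV[R]_d) : nbhd_kernel eps x y =
  if \sum_(i < d) (x ord0 i - y ord0 i) ^+ 2 <= eps ^+ 2 then 1 else 0.
Proof.
rewrite /nbhd_kernel /dist2 -[in LHS](ger0_norm eps_ge0) -sqrtr_sqr.
by rewrite (ler_sqrt _ (sqr_ge0 _)).
Qed.

Lemma nbhd_kernel_refl (x : 'rV[R]_d) : nbhd_kernel eps x x = 1.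
Proof.
rewrite nbhd_kernelE big1 ?sqr_ge0 // => i _.
by rewrite subrr expr0n.
Qed.

Lemma nbhd_kernel_le1 (x y : 'rV[R]_d) : nbhd_kernel eps x y <= 1.
Proof. by rewrite /nbhd_kernel; case: ifP. Qed.

End NeighborhoodKernel.

Section Diamond.
Variables (R : realType) (eps h : R).
Hypothesis eps_ge0 : 0 <= eps.
Hypothesis h_gt0 : 0 < h.
Hypothesis adjacent_close : 2 * h ^+ 2 <= eps ^+ 2.
Hypothesis opposite_far : eps ^+ 2 < 4 * h ^+ 2.

Definition pt2 (u v : R) : 'rV[R]_2 := \row_j (if j == ord0 then u else v).

Lemma pt2_0 u v : pt2 u v ord0 ord0 = u.
Proof. by rewrite mxE. Qed.

Lemma pt2_1 u v : pt2 u v ord0 ord_max = v.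
Proof. by rewrite mxE. Qed.

Local Notation K := (@nbhd_kernel R 2 eps).

Let K_refl : forall x, K x x = 1 := nbhd_kernel_refl eps_ge0.
Let K_le1 : forall x y, K x y <= 1 := @nbhd_kernel_le1 R 2 eps.

Lemma nbhd_kernel_pt2 u v u' v' : K (pt2 u v) (pt2 u' v') =
  if (u - u') ^+ 2 + (v - v') ^+ 2 <= eps ^+ 2 then 1 else 0.
Proof. by rewrite nbhd_kernelE // !big_ord_recr big_ord0 /= !mxE add0r. Qed.

Definition diamond : seq 'rV[R]_2 :=
  [:: pt2 (- h) 0; pt2 0 (- h); pt2 0 h; pt2 h 0].

Lemma diamond_uniq : uniq diamond.
Proof.
apply: (@map_uniq _ _ (fun x : 'rV[R]_2 => (x ord0 ord0, x ord0 ord_max))).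
rewrite /= !pt2_0 !pt2_1 !inE !xpair_eqE !(eq_sym 0) oppr_eq0 eqNr.
by rewrite gt_eqF // !andbF.
Qed.

Definition diamond_side (x : 'rV[R]_2) : 'I_2 :=
  if x ord0 ord0 + x ord0 ord_max < 0 then ord0 else ord_max.

Lemma diamond_side_close : {in diamond &, forall x y,
  diamond_side x = diamond_side y -> K x y = 1}.
Proof.
have [a_neg b_neg c_pos e_pos] :
    [/\ - h + 0 < 0, 0 - h < 0, (0 + h < 0) = false & (h + 0 < 0) = false].
  (* lra does not see section hypotheses, hence the explicit [move:]. *)
  by move: h_gt0 => ?; split; [lra | lra | apply/negbTE; rewrite -leNgt; lra ..].
move=> x y; rewrite !inE => /or4P[] /eqP-> /or4P[] /eqP->;
  rewrite /diamond_side !pt2_0 !pt2_1 ?a_neg ?b_neg ?c_pos ?e_pos // => _;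
  rewrite nbhd_kernel_pt2 ifT //; move: adjacent_close; nra.
Qed.

Lemma diamond_cost_opt : is_cost_opt K 2 diamond 0.
Proof.
split=> [|f]; last exact: (partition_cost_ge0 K_refl K_le1).
by exists diamond_side; exact: (partition_cost_eq0 K_refl diamond_side_close).
Qed.

Lemma diamond_tree_cost_gt0 t : nleaves t = 2%N -> 0 < tree_cost K t diamond.
Proof.
case/nleaves_eq2 => i [a] [b] ->.
have opposite_apart u v u' v' : (u - u') ^+ 2 + (v - v') ^+ 2 = 4 * h ^+ 2 ->
    K (pt2 u v) (pt2 u' v') < 1.
  move=> uv_far; rewrite nbhd_kernel_pt2 uv_far leNgt opposite_far /=.
  exact: ltr01.
have [->|->] : i = ord0 \/ i = ord_max.
  by case: i => [[|[|]]] // ?; [left|right]; apply: val_inj.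
- apply: (split_cost_gt0 K_refl K_le1 a b (p := pt2 0 (- h)) (q := pt2 0 h));
    rewrite ?inE ?eqxx ?orbT ?pt2_0 //.
  by apply: opposite_apart; ring.
- apply: (split_cost_gt0 K_refl K_le1 a b (p := pt2 (- h) 0) (q := pt2 h 0));
    rewrite ?inE ?eqxx ?orbT ?pt2_1 //.
  by apply: opposite_apart; ring.
Qed.

End Diamond.

Theorem proposition2 (R : realType) (eps : R) :
  0 < eps ->
  exists (d k : nat) (X : seq 'rV[R]_d),
    uniq X /\
    is_cost_opt (@nbhd_kernel R d eps) k X 0 /\
    (forall t : itree R d, itree_valid t -> nleaves t = k ->
       0 < tree_cost (@nbhd_kernel R d eps) t X).
Proof.
move=> eps_gt0; pose h := 2 * eps / 3.
have eps_ge0 : 0 <= eps by exact: ltW.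
have h_gt0 : 0 < h by rewrite /h; lra.
have adjacent_close : 2 * h ^+ 2 <= eps ^+ 2 by rewrite /h; nra.
have opposite_far : eps ^+ 2 < 4 * h ^+ 2 by rewrite /h; nra.
exists 2%N, 2%N, (diamond h); split; first exact: diamond_uniq h_gt0.
split; first exact: diamond_cost_opt eps_ge0 h_gt0 adjacent_close.
by move=> t _; apply: (diamond_tree_cost_gt0 eps_ge0 opposite_far).
Qed.
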